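(* Suppose the basic set of weighting functions is used, and suppose that (i) Assumption A8 holds and (ii) $K$ has support $[-1,1]$, is continuous, and is strictly positive on $(-1,1)$. Then Assumption A9 holds.
   Context: For each $n$, $X_1,\dots,X_n$ are i.i.d. copies of a scalar random variable $X$ with support infimum $s_l$ and supremum $s_r$. Basic set of weighting functions: $\mathcal{S}_n=\{(x,h):x\in\{X_1,\dots,X_n\},h\in H_n\}$, $H_n=\{h=h_{\max}u^l:h\ge h_{\min},l=0,1,2,\dots\}$, $u=0.5$, $h_{\max}=\max_{i,j}|X_i-X_j|/2$, $h_{\min}=0.4h_{\max}(\log n/n)^{1/3}$, with kernel weighting functions $Q(x_1,x_2,(x,h))=|x_1-x_2|^kK((x_1-x)/h)K((x_2-x)/h)$ for a fixed $k\ge0$; $p=|\mathcal{S}_n|$. A8: $c_3(x_2-x_1)\le\Pr(X\in[x_1,x_2])\le C_3(x_2-x_1)$ for all $[x_1,x_2]\subset[s_l,s_r]$, constants $c_3,C_3>0$. A9 (for fixed $\beta\in(0,1]$, $h_n=(\log p/n)^{1/(2\beta+3)}$, and some constants $c_4,C_4,c_5>0$): with probability approaching one, for all $[x_1,x_2]\subset[s_l,s_r]$ with $x_2-x_1=h_n$ there exists $s\in\mathcal{S}_n$ such that (i) the support of $Q(\cdot,\cdot,s)$ is contained in $[x_1,x_2]^2$, (ii) $Q(\cdot,\cdot,s)\le C_4h_n^k$, (iii) there are non-intersecting subintervals $[x_{l1},x_{r1}],[x_{l2},x_{r2}]$ of $[x_1,x_2]$ with $x_{r1}-x_{l1}\ge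 c_5h_n$, $x_{r2}-x_{l2}\ge c_5h_n$, $x_{l2}-x_{r1}\ge c_5h_n$, and $Q(y_1,y_2,s)\ge c_4h_n^k$ whenever $y_1\in[x_{l1},x_{r1}]$, $y_2\in[x_{l2},x_{r2}]$. *)

From HB Require Import structures.
From mathcomp Require Import all_boot all_order all_algebra.
From mathcomp Require Import finmap.
From mathcomp Require Import all_classical all_reals all_analysis.
Set Implicit Arguments. Unset Strict Implicit. Unset Printing Implicit Defensive.
Import Order.TTheory GRing.Theory Num.Theory.
Import numFieldNormedType.Exports.
Local Open Scope classical_set_scope.
Local Open Scope ring_scope.

Definition mutually_independent (d : measure_display) (T : measurableType d)
    (R : realType) (P : probability T R) (X : nat -> T -> R) : Prop :=
  forall (I : {fset nat}) (B : nat -> set R),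
    (forall i, i \in I -> measurable (B i)) ->
    P (\bigcap_(i in [set` I]) (X i @^-1` B i)) =
    (\prod_(i <- I) P (X i @^-1` B i))%E.

Definition same_law (d : measure_display) (T : measurableType d)
    (R : realType) (P : probability T R) (Y X0 : T -> R) : Prop :=
  forall B : set R, measurable B -> P (Y @^-1` B) = P (X0 @^-1` B).

Definition open_itv (R : realType) (x e : R) : set R := `]x - e, x + e[.

Definition law_support (d : measure_display) (T : measurableType d)
    (R : realType) (P : probability T R) (X0 : T -> R) : set R :=
  [set x | forall e : R, 0 < e -> (0 < P (X0 @^-1` open_itv x e))%E].

Definition supp_inf (d : measure_display) (T : measurableType d)
    (R : realType) (P : probability T R) (X0 : T -> R) : \bar R :=
  ereal_inf [set x%:E | x in law_support P X0].
Definition supp_sup (d : measure_display) (T : measurableType d)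
    (R : realType) (P : probability T R) (X0 : T -> R) : \bar R :=
  ereal_sup [set x%:E | x in law_support P X0].

Definition assumption_A8 (d : measure_display) (T : measurableType d)
    (R : realType) (P : probability T R) (X0 : T -> R) : Prop :=
  exists c3 C3 : R, 0 < c3 /\ 0 < C3 /\
    forall x1 x2 : R, x1 <= x2 ->
      (supp_inf P X0 <= x1%:E)%E -> (x2%:E <= supp_sup P X0)%E ->
      ((c3 * (x2 - x1))%R%:E <= P (X0 @^-1` `[x1, x2]))%E /\
      (P (X0 @^-1` `[x1, x2]) <= (C3 * (x2 - x1))%R%:E)%E.

Section Basic.
Variable R : realType.

Definition u_ratio : R := 2^-1.

Definition h_max (n : nat) (xs : nat -> R) : R :=
  \big[Num.max/0]_(i < n) \big[Num.max/0]_(j < n) (`|xs i - xs j| / 2).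

Definition h_min (n : nat) (xs : nat -> R) : R :=
  (2 / 5) * h_max n xs * ((ln (n%:R) / n%:R) `^ (3^-1)).

Definition H_set (n : nat) (xs : nat -> R) : set R :=
  [set h | exists l : nat, h = h_max n xs * u_ratio ^+ l /\ h_min n xs <= h].

Definition S_set (n : nat) (xs : nat -> R) : set (R * R) :=
  [set s | (exists i : nat, (i < n)%N /\ s.1 = xs i) /\ H_set n xs s.2].

Definition p_card (n : nat) (xs : nat -> R) : nat :=
  (#|` fset_set (S_set n xs) |)%fset.

Definition Qw (k : R) (K : R -> R) (y1 y2 : R) (s : R * R) : R :=
  `|y1 - y2| `^ k * K ((y1 - s.1) / s.2) * K ((y2 - s.1) / s.2).

Definition h_n (beta : R) (n : nat) (xs : nat -> R) : R :=
  (ln ((p_card n xs)%:R) / n%:R) `^ (1 / (2 * beta + 3)).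

Definition A9_event (k : R) (K : R -> R) (sl sr : \bar R)
    (beta c4 C4 c5 : R) (n : nat) (xs : nat -> R) : Prop :=
  let hn := h_n beta n xs in
  forall x1 x2 : R,
    (sl <= x1%:E)%E -> (x2%:E <= sr)%E -> x2 - x1 = hn ->
    exists s : R * R, S_set n xs s /\
      closure [set y : R * R | Qw k K y.1 y.2 s != 0]
        `<=` `[x1, x2] `*` `[x1, x2] /\
      (forall y1 y2 : R, Qw k K y1 y2 s <= C4 * hn `^ k) /\
      (exists xl1 xr1 xl2 xr2 : R,
        `[xl1, xr1] `<=` `[x1, x2] /\ `[xl2, xr2] `<=` `[x1, x2] /\
        `[xl1, xr1] `&` `[xl2, xr2] = set0 /\
        c5 * hn <= xr1 - xl1 /\ c5 * hn <= xr2 - xl2 /\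
        c5 * hn <= xl2 - xr1 /\
        (forall y1 y2 : R, xl1 <= y1 <= xr1 -> xl2 <= y2 <= xr2 ->
           c4 * hn `^ k <= Qw k K y1 y2 s)).

End Basic.

(* "with probability approaching one": there are events A_n, each contained
   in the event E_n, with P(A_n) -> 1 (inner-probability reading). *)
Definition wpa1 (d : measure_display) (T : measurableType d)
    (R : realType) (P : probability T R) (E : nat -> set T) : Prop :=
  exists A : nat -> set T,
    (forall n, measurable (A n) /\ A n `<=` E n) /\
    (P (A n) @[n --> \oo] --> 1%E).

(* Assumption A9 for the i.i.d. sample X_0, X_1, ... (a sample of size n is
   X_0, ..., X_(n-1)), for a given beta. *)
Definition assumption_A9 (d : measure_display) (T : measurableType d)
    (R : realType) (P : probability T R) (X : nat -> T -> R) (X0 : T -> R)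
    (k : R) (K : R -> R) (beta : R) : Prop :=
  exists c4 C4 c5 : R, 0 < c4 /\ 0 < C4 /\ 0 < c5 /\
    wpa1 P (fun n => [set w | A9_event k K (supp_inf P X0) (supp_sup P X0)
                                 beta c4 C4 c5 n (fun i => X i w)]).

From HB Require Import structures.
From mathcomp Require Import all_boot all_order all_algebra.
From mathcomp Require Import finmap.
From mathcomp Require Import all_classical all_reals all_analysis.
From mathcomp Require Import measurable_realfun ring lra.
Set Implicit Arguments. Unset Strict Implicit. Unset Printing Implicit Defensive.
Import Order.TTheory GRing.Theory Num.Theory.
Import numFieldNormedType.Exports.
Local Open Scope classical_set_scope.
Local Open Scope ring_scope.

(* Suppose every sample point lies in the support [a, b] and each of the N
   cells of width w <= h_lo / 8 tiling [a, b] contains one.  Then every window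
   [x1, x2] of length h_n has a sample point X_i within h_n / 8 of its
   midpoint, and the dyadic grid H_n has a bandwidth h in (h_n / 8, h_n / 4],
   so s = (X_i, h) is in S_n.  The weight Q(., ., s) lives on
   [X_i - h, X_i + h]^2, is at most M^2 h_n^k, and is at least
   kap^2 (h_n / 16)^k on [X_i - 3h/4, X_i - h/4] x [X_i + h/4, X_i + 3h/4],
   where M and kap bound K above and below on [-3/4, 3/4].  Here
   h_lo = (log 2 / n)^(1/(2 beta + 3)) <= h_n, and h_min <= h_lo / 8 for large
   n because 1/(2 beta + 3) < 1/3.  By A8 each cell has probability at least
   c3 w, so the supposition fails with probability at most
   N (1 - c3 w)^n = O(1/n), as N^3 = O(n).  A8 also forces the support to be
   bounded. *)

Lemma closedX (T U : topologicalType) (A : set T) (B : set U) :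
  closed A -> closed B -> closed (A `*` B).
Proof.
move=> cA cB; rewrite (_ : A `*` B = fst @^-1` A `&` snd @^-1` B) //.
apply: closedI; apply: preimage_closed => // -[x y] _.
  exact: cvg_fst.
exact: cvg_snd.
Qed.

Section Kernel.
Variables (R : realType) (K : R -> R).
Hypothesis K_cont : continuous K.

Lemma nonzero_in_closure_itv (a b : R) :
  closure [set x | K x != 0] = `[a, b]%classic -> forall x, K x != 0 -> a <= x <= b.
Proof.
move=> hcl x Kx; have : closure [set x | K x != 0] x by exact: subset_closure.
by rewrite hcl /= in_itv.
Qed.

Lemma compact_support_bounded (a b : R) :
  (forall x, K x != 0 -> a <= x <= b) -> exists M, 0 < M /\ forall x, `|K x| <= M.
Proof.
move=> Ksupp; have [ab|ba] := leP a b; last first.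
  exists 1; split => // x; have [/eqP ->|/Ksupp] := boolP (K x == 0).
    by rewrite normr0.
  by move=> /andP[xa xb]; have := le_trans xa xb; rewrite leNgt ba.
have cnK : continuous (fun x => `|K x|).
  by move=> x; apply: continuous_comp; [exact: K_cont | exact: norm_continuous].
have [c _ Kc] := EVT_max ab (continuous_subspaceT cnK).
exists (`|K c| + 1); split => [|x]; first by rewrite ltr_wpDl.
have [/eqP ->|/Ksupp xab] := boolP (K x == 0).
  by rewrite normr0 ltW // ltr_wpDl.
by apply: le_trans (Kc x _) _; rewrite ?in_itv ?lerDl.
Qed.

Lemma positive_lower_bound (r : R) :
  (forall x : R, -1 < x < 1 -> 0 < K x) -> 0 <= r < 1 ->
  exists kap, 0 < kap /\ forall x, -r <= x <= r -> kap <= K x.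
Proof.
move=> Kpos /andP[r0 r1]; have rr : -r <= r by lra.
have [c] := EVT_min rr (continuous_subspaceT K_cont).
rewrite in_itv /= => /andP[c1 c2] Kc; exists (K c); split.
  by apply: Kpos; apply/andP; split; lra.
by move=> x xr; apply: Kc; rewrite in_itv.
Qed.

End Kernel.

Section KernelWeight.
Variables (R : realType) (k : R) (K : R -> R) (M kap : R).
Hypotheses (k_ge0 : 0 <= k) (kap_gt0 : 0 < kap).
Hypothesis K_supp : forall x, K x != 0 -> -1 <= x <= 1.
Hypothesis K_le : forall x, `|K x| <= M.
Hypothesis K_ge : forall x, -(3/4) <= x <= 3/4 -> kap <= K x.
Variables (x h : R).
Hypothesis h_gt0 : 0 < h.

Lemma K_scaled_supp y : K ((y - x) / h) != 0 -> x - h <= y <= x + h.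
Proof.
move=> /K_supp /andP[]; rewrite ler_pdivlMr // ler_pdivrMr // => l r.
by apply/andP; split; lra.
Qed.

Lemma closure_Qw_neq0 :
  closure [set y | Qw k K y.1 y.2 (x, h) != 0] `<=`
    `[x - h, x + h] `*` `[x - h, x + h].
Proof.
have cbox : closed (`[x - h, x + h] `*` `[x - h, x + h] : set (R * R)).
  by apply: closedX; exact: itv_closed.
rewrite [X in _ `<=` X](closure_id _).1 //; apply: closureS => -[y1 y2] /=.
rewrite /Qw !mulf_eq0 !negb_or /= => /andP[/andP[_ /K_scaled_supp y1h]].
by move/K_scaled_supp => y2h; split; rewrite /= in_itv.
Qed.

Lemma Qw_le y1 y2 : Qw k K y1 y2 (x, h) <= M ^+ 2 * (2 * h) `^ k.
Proof.
rewrite /Qw /=; have M0 : 0 <= M by apply: le_trans (K_le 0).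
have [/eqP ->|/K_scaled_supp/andP[a1 a2]] := boolP (K ((y1 - x) / h) == 0).
  by rewrite mulr0 mul0r mulr_ge0 ?powR_ge0 ?sqr_ge0.
have [/eqP ->|/K_scaled_supp/andP[a3 a4]] := boolP (K ((y2 - x) / h) == 0).
  by rewrite mulr0 mulr_ge0 ?powR_ge0 ?sqr_ge0.
have dy : `|y1 - y2| <= 2 * h by rewrite ler_norml; apply/andP; split; lra.
apply: le_trans (ler_norm _) _; rewrite !normrM ger0_norm ?powR_ge0 //.
rewrite (_ : M ^+ 2 * _ = (2 * h) `^ k * M * M); last by rewrite expr2; ring.
do 2 (apply: ler_pM; rewrite ?mulr_ge0 ?powR_ge0 //).
by apply: ge0_ler_powR; rewrite ?nnegrE // mulr_ge0 //; lra.
Qed.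

Lemma Qw_ge y1 y2 : x - 3 * h / 4 <= y1 <= x - h / 4 ->
  x + h / 4 <= y2 <= x + 3 * h / 4 ->
  kap ^+ 2 * (h / 2) `^ k <= Qw k K y1 y2 (x, h).
Proof.
move=> /andP[a1 a2] /andP[a3 a4].
have Ky1 : kap <= K ((y1 - x) / h).
  by apply: K_ge; rewrite ler_pdivlMr // ler_pdivrMr //; apply/andP; split; lra.
have Ky2 : kap <= K ((y2 - x) / h).
  by apply: K_ge; rewrite ler_pdivlMr // ler_pdivrMr //; apply/andP; split; lra.
rewrite /Qw /= (_ : kap ^+ 2 * _ = (h / 2) `^ k * kap * kap); last first.
  by rewrite expr2; ring.
have kap0 := ltW kap_gt0.
apply: ler_pM; rewrite ?mulr_ge0 ?powR_ge0 //.
apply: ler_pM; rewrite ?powR_ge0 //.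
have dy : h / 2 <= `|y1 - y2| by rewrite distrC ger0_norm; lra.
by apply: ge0_ler_powR; rewrite // nnegrE; lra.
Qed.

End KernelWeight.

Section Rates.
Variable R : realType.

(* [h_n] with [p] replaced by its lower bound [2]. *)
Definition h_lo (beta : R) (n : nat) : R := (ln 2 / n%:R) `^ (1 / (2 * beta + 3)).

Lemma powR_itv01 (x e : R) : 0 < x <= 1 -> 0 <= e -> 0 < x `^ e <= 1.
Proof.
move=> /andP[x0 x1] e0; rewrite powR_gt0 //= -[leRHS](powRr0 x).
by apply: ger_powR; rewrite ?x0.
Qed.

Lemma ln_div_itv01 (x y : R) : 1 < x <= y -> 0 < ln x / y <= 1.
Proof.
move=> /andP[x1 xy]; rewrite divr_gt0 ?ln_gt0 //=; last lra.
by rewrite ler_pdivrMr ?mul1r; [apply: ltW; apply: lt_le_trans (ln_sublinear _) xy|]; lra.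
Qed.

Lemma h_lo_itv01 beta n : 0 < beta -> (2 <= n)%N -> 0 < h_lo beta n <= 1.
Proof.
move=> beta0 n2; apply: powR_itv01; last by rewrite divr_ge0 //; lra.
by apply: ln_div_itv01; rewrite (ltr_nat _ 1) (ler_nat _ 2).
Qed.

Lemma h_lo_cube_ge beta n : 0 < beta -> (2 <= n)%N ->
  ln 2 / n%:R <= h_lo beta n ^+ 3.
Proof.
move=> beta0 n2; rewrite /h_lo -powR_mulrn ?powR_ge0 // -powRrM; apply: ger1_powR.
  by apply: ln_div_itv01; rewrite (ltr_nat _ 1) (ler_nat _ 2).
by rewrite mul1r ler_pdivrMl; lra.
Qed.

End Rates.

Section Bandwidths.
Variable R : realType.
Implicit Types (n : nat) (xs : nat -> R).

Lemma h_max_le n xs a b : (forall i, (i < n)%N -> a <= xs i <= b) -> a <= b ->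
  h_max n xs <= (b - a) / 2.
Proof.
move=> xs_ab ab; apply: bigmax_le => [|i _]; first lra.
apply: bigmax_le => [|j _]; first lra.
have /andP[? ?] := xs_ab i (ltn_ord i); have /andP[? ?] := xs_ab j (ltn_ord j).
have : `|xs i - xs j| <= b - a by rewrite ler_norml; apply/andP; split; lra.
lra.
Qed.

Lemma h_max_ge n xs i j : (i < n)%N -> (j < n)%N ->
  `|xs i - xs j| / 2 <= h_max n xs.
Proof.
move=> ilt jlt; apply: le_trans (le_bigmax _ _ (Ordinal ilt)).
exact: (le_bigmax _ (fun j0 : 'I_n => `|xs i - xs j0| / 2) (Ordinal jlt)).
Qed.

Lemma u_ratioX l : u_ratio R ^+ l = (2 ^+ l)^-1.
Proof. by rewrite /u_ratio exprVn. Qed.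

Lemma exists_halving_grid (A B : R) : 0 < B -> B / 2 < A ->
  exists l, B / 2 < A * u_ratio R ^+ l <= B.
Proof.
move=> B0 BA; have A0 : 0 < A by lra.
have [l0 Al0] : exists l, A * u_ratio R ^+ l <= B.
  exists (Num.Def.archi_bound (A / B)).
  have := @upper_nthrootP R (A / B) _ (leqnn _).
  rewrite u_ratioX ltr_pdivrMr // => /ltW AB.
  by rewrite ler_pdivrMr ?exprn_gt0 // mulrC.
have ex_l : exists l, (fun l => A * u_ratio R ^+ l <= B) l by exists l0.
case: (ex_minnP ex_l) => l Al_le l_min.
exists l; rewrite Al_le andbT; case: l Al_le l_min => [|l] Al_le l_min.
  by rewrite expr0 mulr1.
have : ~~ (A * u_ratio R ^+ l <= B) by apply/negP => /l_min; rewrite ltnn.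
by rewrite -ltNge exprS mulrCA /u_ratio; lra.
Qed.

Lemma exists_cell (w y : R) N : 0 < w -> (0 < N)%N -> 0 <= y <= N%:R * w ->
  exists2 j, (j < N)%N & j%:R * w <= y <= j%:R * w + w.
Proof.
move=> w0 N0 /andP[y0 yN]; have yw0 : 0 <= y / w by rewrite divr_ge0 // ltW.
have /andP[jy yj] := truncn_itv yw0; set j := Num.truncn (y / w) in jy yj.
rewrite ler_pdivlMr // in jy; rewrite ltr_pdivrMr // -natr1 in yj.
have [jN|Nj] := ltnP j N; first by exists j => //; apply/andP; split; lra.
case: N N0 yN Nj => [//|N] _ yN Nj; exists N => //.
have : N.+1%:R * w <= j%:R * w by rewrite ler_pM2r // ler_nat.
by rewrite -natr1 in yN *; move=> ?; apply/andP; split; lra.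
Qed.

(* Needed since [p_card] counts [fset_set], which is empty on infinite sets. *)
Lemma S_set_finite n xs : 0 < h_min n xs -> finite_set (S_set n xs).
Proof.
move=> hmin0; set m := Num.Def.archi_bound (h_max n xs / h_min n xs).
apply: (@sub_finite_set _ _
  [set (fun i l => (xs i, h_max n xs * u_ratio R ^+ l)) i l | i in `I_n & l in `I_m]).
  move=> [x h] [[i [ilt /= ->]]] [l [/= -> hl]].
  exists i => //; exists l => //=; rewrite ltnNge; apply/negP => ml.
  have := @upper_nthrootP R _ _ ml; rewrite ltr_pdivrMr //.
  by move: hl; rewrite u_ratioX ler_pdivlMr ?exprn_gt0 //; lra.
by apply: finite_image2; exact: finite_II.
Qed.

Lemma p_card_ge2 n xs s1 s2 : finite_set (S_set n xs) ->
  S_set n xs s1 -> S_set n xs s2 -> s1 != s2 -> (2 <= p_card n xs)%N.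
Proof.
move=> Sfin Ss1 Ss2 s12; rewrite /p_card -(_ : #|` [fset s1; s2]%fset| = 2%N).
  apply: fsubset_leq_card; apply/fsubsetP => s.
  by rewrite !inE => /orP[] /eqP ->; rewrite in_fset_set // inE.
by rewrite cardfs2 s12.
Qed.

Lemma h_n_ge beta n xs : 0 < beta -> (0 < n)%N -> (2 <= p_card n xs)%N ->
  h_lo beta n <= h_n beta n xs.
Proof.
move=> beta0 n0 p2; have n0r : 0 < n%:R :> R by rewrite ltr0n.
have p0 : 0 < (p_card n xs)%:R :> R by rewrite ltr0n (leq_trans _ p2).
have ln20 : 0 < ln (2 : R) by apply: ln_gt0; lra.
apply: ge0_ler_powR; rewrite ?nnegrE.
- by rewrite divr_ge0 //; lra.
- by rewrite divr_ge0 // ltW.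
- by rewrite divr_ge0 ?ln_ge0 ?(ler_nat _ 1) ?(leq_trans _ p2) // ltW.
- by rewrite ler_pM2r ?invr_gt0 // ler_ln ?posrE // (ler_nat _ 2).
Qed.

End Bandwidths.

Section CellsHitA9.
Variables (R : realType) (k beta M kap : R) (K : R -> R).
Hypotheses (k_ge0 : 0 <= k) (beta_gt0 : 0 < beta) (kap_gt0 : 0 < kap).
Hypothesis K_supp : forall x, K x != 0 -> -1 <= x <= 1.
Hypothesis K_le : forall x, `|K x| <= M.
Hypothesis K_ge : forall x, -(3/4) <= x <= 3/4 -> kap <= K x.
Variables (n N : nat) (xs : nat -> R) (a b : R).
Hypotheses (n_ge2 : (2 <= n)%N) (N_ge5 : (5 <= N)%N) (ab : a < b).
Let w := (b - a) / N%:R.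
Hypothesis cells_narrow : 8 * w <= h_lo beta n.
Hypothesis h_min_small :
  (b - a) / 5 * (ln n%:R / n%:R) `^ (3^-1) <= h_lo beta n / 8.
Hypothesis xs_in : forall i, (i < n)%N -> a <= xs i <= b.
Hypothesis cells_hit : forall j, (j < N)%N ->
  exists2 i, (i < n)%N & a + j%:R * w <= xs i <= a + j%:R * w + w.

Let N_gt0 : (0 < N)%N. Proof. exact: leq_trans N_ge5. Qed.
Let w_gt0 : 0 < w. Proof. by rewrite /w divr_gt0 ?ltr0n ?N_gt0 // subr_gt0. Qed.
Let Nw : N%:R * w = b - a. Proof. by rewrite /w mulrC divfK // pnatr_eq0 -lt0n N_gt0. Qed.
Let t := (ln n%:R / n%:R) `^ (3^-1) : R.
Let t_itv01 : 0 < t <= 1.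
Proof.
apply: powR_itv01; last by rewrite invr_ge0.
by apply: ln_div_itv01; rewrite lexx andbT (ltr_nat _ 1).
Qed.

Lemma h_max_ge_cells : 3 * (b - a) / 10 <= h_max n xs.
Proof.
have [i0 i0n /andP[_ x0]] := cells_hit N_gt0.
have [i1 i1n /andP[x1 _]] := cells_hit (ltac:(by rewrite prednK) : (N.-1 < N)%N).
have eN : N.-1%:R * w = b - a - w.
  by rewrite -Nw -{2}(prednK N_gt0) -natr1 mulrDl mul1r addrK.
have w5 : 5 * w <= b - a by rewrite -Nw ler_pM2r // (ler_nat _ 5).
apply: le_trans _ (h_max_ge xs i1n i0n); rewrite mul0r addr0 in x0; rewrite eN in x1.
have : xs i1 - xs i0 <= `|xs i1 - xs i0| by exact: ler_norm.
lra.
Qed.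

Lemma h_min_gt0 : 0 < h_min n xs.
Proof.
(* [lra] does not use section hypotheses, hence the local copies of [ab]. *)
have := h_max_ge_cells; case/andP: t_itv01 => t0 _ hmax; have ab' := ab.
by rewrite /h_min -/t !mulr_gt0 //; lra.
Qed.

Lemma h_min_le_half_h_max : h_min n xs <= h_max n xs / 2.
Proof.
have := h_max_ge_cells; case/andP: t_itv01 => t0 t1 hmax; have ab' := ab.
rewrite /h_min -/t; have : h_max n xs * t <= h_max n xs by rewrite ler_piMr //; lra.
lra.
Qed.

Lemma h_min_le_h_lo : h_min n xs <= h_lo beta n / 8.
Proof.
have := h_max_le xs_in (ltW ab); case/andP: t_itv01 => t0 _ hmax.
apply: le_trans h_min_small; rewrite /h_min -/t.
have : h_max n xs * t <= (b - a) / 2 * t by rewrite ler_wpM2r // ltW.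
lra.
Qed.

Lemma p_card_cells_ge2 : (2 <= p_card n xs)%N.
Proof.
have [i0 i0n _] := cells_hit N_gt0; have hmax := h_max_ge_cells; have ab' := ab.
have hmin := h_min_le_half_h_max.
apply: (@p_card_ge2 _ _ _ (xs i0, h_max n xs) (xs i0, h_max n xs * u_ratio R)).
- exact: S_set_finite h_min_gt0.
- by split; [exists i0 | exists 0%N; rewrite /= expr0 mulr1; split => //; lra].
- by split; [exists i0 | exists 1%N; rewrite /= expr1 /u_ratio; split => //; lra].
- by apply/eqP => -[]; rewrite /u_ratio; lra.
Qed.

Lemma sample_near_midpoint x1 x2 : a <= x1 -> x2 <= b -> x1 <= x2 ->
  exists2 i, (i < n)%N & `|xs i - (x1 + x2) / 2| <= w.
Proof.
move=> ax1 x2b x12; have mid : 0 <= (x1 + x2) / 2 - a <= N%:R * w.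
  by rewrite Nw; apply/andP; split; lra.
have [j jN /andP[? ?]] := exists_cell w_gt0 N_gt0 mid.
have [i ilt /andP[? ?]] := cells_hit jN.
by exists i => //; rewrite ler_norml; apply/andP; split; lra.
Qed.

Lemma A9_event_of_cells_hit :
  A9_event k K a%:E b%:E beta (kap ^+ 2 * (1 / 16) `^ k) (M ^+ 2) (1 / 16) n xs.
Proof.
have /andP[hlo0 _] := h_lo_itv01 beta_gt0 n_ge2.
have narrow := cells_narrow; have ab' := ab.
have hn_ge := h_n_ge beta_gt0 (ltnW n_ge2) p_card_cells_ge2.
rewrite /A9_event; set hn := h_n beta n xs in hn_ge *.
move=> x1 x2; rewrite !lee_fin => ax1 x2b x12.
have [i ilt xi] := sample_near_midpoint ax1 x2b (ltac:(lra)).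
have [l /andP[hl1 hl2]] : exists l, hn / 4 / 2 < h_max n xs * u_ratio R ^+ l <= hn / 4.
  by apply: exists_halving_grid; have := h_max_ge_cells; lra.
set h := h_max n xs * _ in hl1 hl2; set x := xs i in xi.
have h0 : 0 < h by lra.
have [xh1 xh2] : x1 <= x - h /\ x + h <= x2.
  by move: xi; rewrite ler_norml => /andP[? ?]; split; lra.
exists (x, h); split.
  split; first by exists i.
  by exists l; split => //=; have := h_min_le_h_lo; lra.
split.
  apply: subset_trans (closure_Qw_neq0 (k := k) K_supp h0) _ => -[y1 y2] [] /=.
  by rewrite /= !in_itv /= => /andP[? ?] /andP[? ?]; split; apply/andP; split; lra.
split.
  move=> y1 y2; apply: le_trans (Qw_le k_ge0 K_supp K_le x h0 y1 y2) _.
  rewrite ler_wpM2l ?sqr_ge0 //.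
  by apply: ge0_ler_powR; rewrite ?nnegrE //; lra.
exists (x - 3 * h / 4), (x - h / 4), (x + h / 4), (x + 3 * h / 4).
do 2 (split; first by apply: subset_itv; rewrite bnd_simp; lra).
split.
  by apply/seteqP; split => // y /=; rewrite !in_itv /= => -[/andP[? ?] /andP[? ?]]; lra.
do 3 (split; first lra).
move=> y1 y2 y1_in y2_in.
apply: le_trans (Qw_ge k_ge0 kap_gt0 K_ge h0 y1_in y2_in).
rewrite -mulrA -powRM; [|lra|lra]; rewrite ler_wpM2l ?sqr_ge0 //.
by apply: ge0_ler_powR; rewrite ?nnegrE //; lra.
Qed.

End CellsHitA9.

Section LawSupport.
Context d (T : measurableType d) (R : realType) (P : probability T R).

Lemma law_supportN (f : T -> R) x :
  law_support P (fun w => - f w) x <-> law_support P f (- x).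
Proof.
have pre e : (fun w => - f w) @^-1` open_itv x e = f @^-1` open_itv (- x) e.
  by apply/seteqP; split => w; rewrite /open_itv /= !in_itv /= => /andP[? ?];
    apply/andP; split; lra.
by split => fx e e0; [rewrite -pre | rewrite pre]; exact: fx.
Qed.

Lemma supp_infN (f : T -> R) : supp_inf P (fun w => - f w) = (- supp_sup P f)%E.
Proof.
rewrite /supp_sup ereal_supEN oppeK /supp_inf; congr ereal_inf.
apply/seteqP; split => [_ [x /law_supportN fx <-]|_ [_ [x fx <-] <-]] /=.
  by exists (- x%:E)%E; [exists (- x) | rewrite oppeK].
by exists (- x) => //; apply/law_supportN; rewrite opprK.
Qed.

Lemma measurable_preimageT (f : T -> R) (Y : set R) :
  measurable_fun setT f -> measurable Y -> measurable (f @^-1` Y).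
Proof. by move=> mf mY; rewrite -[_ @^-1` _]setTI; exact: mf. Qed.

Lemma probE (A : set T) : measurable A -> P A = (fine (P A))%:E.
Proof. by move=> mA; rewrite fineK // fin_num_measure. Qed.

Section LawSupportPreimage.
Variables (f : T -> R) (mf : measurable_fun setT f).
Let mpre Y : measurable Y -> measurable (f @^-1` Y) := measurable_preimageT mf.

Lemma law_support_le lo x : (0 < P (f @^-1` `]lo, x]))%E ->
  exists2 c, law_support P f c & c <= x.
Proof.
move=> Px; set S := [set y | (0 < P (f @^-1` `]lo, y]))%E].
have lo_lt y : S y -> lo < y.
  move=> Sy; rewrite ltNge; apply/negP => ylo; move: Sy; rewrite /S /=.
  suff -> : f @^-1` `]lo, y] = set0 by rewrite measure0 ltxx.
  apply/seteqP; split => // w /=; rewrite in_itv /= => /andP[lof fy].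
  by have := lt_le_trans lof fy; rewrite ltNge ylo.
have S0 : S !=set0 by exists x.
have Slb : has_lbound S by exists lo => y /lo_lt /ltW.
exists (inf S); last exact: ge_inf.
move=> e e0; have [y Sy ye] := inf_lt S0 (ltac:(rewrite ltrDl; lra) : inf S < inf S + e / 2).
have Ple : (P (f @^-1` `]lo, y]) <=
    P (f @^-1` `]lo, (inf S - e)%R]) + P (f @^-1` open_itv (inf S) e))%E.
  have mlo z : measurable (f @^-1` `]lo, z]) by exact: mpre (measurable_itv _).
  have mO : measurable (f @^-1` open_itv (inf S) e).
    exact: mpre (measurable_itv `](inf S - e), (inf S + e)[).
  apply: le_trans (measureU2 _ (mlo _) mO).
  apply: le_measure; rewrite ?inE; [exact: mlo|exact: measurableU|].
  move=> w /=; rewrite /open_itv !in_itv /= => /andP[-> fy].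
  case: (leP (f w) (inf S - e)) => fe; [by left|right; rewrite /= in_itv /= fe /=].
  by clear -fy ye e0; lra.
suff P0 : P (f @^-1` `]lo, (inf S - e)%R]) = 0%E by rewrite P0 add0e in Ple; exact: lt_le_trans Ple.
apply/eqP; rewrite eq_le measure_ge0 andbT leNgt; apply/negP => Se.
by have := ge_inf Slb Se; clear -e0; lra.
Qed.

Lemma supp_inf_null a : supp_inf P f = a%:E -> P (f @^-1` `]-oo, a[) = 0%E.
Proof.
move=> fa; pose B m := f @^-1` `]a - m.+1%:R, a - m.+1%:R^-1].
have mB m : measurable (B m) by exact: mpre.
have sub : f @^-1` `]-oo, a[ `<=` \bigcup_m B m.
  move=> w /=; rewrite in_itv /= => fwa; have d0 : 0 < a - f w by rewrite subr_gt0.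
  have [m /andP[m1 m2]] : exists m, (a - f w < m.+1%:R) && ((a - f w)^-1 < m.+1%:R).
    have di : 0 < (a - f w)^-1 by rewrite invr_gt0.
    exists (Num.Def.archi_bound (a - f w + (a - f w)^-1)).
    have := archi_boundP (addr_ge0 (ltW d0) (ltW di)); rewrite -natr1.
    by move=> ?; apply/andP; split; lra.
  exists m => //; rewrite /B /= in_itv /=; apply/andP; split; first lra.
  by rewrite lerBrDl -lerBrDr ltW // -ltf_pV2 ?posrE ?invr_gt0 ?ltr0n // invrK.
apply/negligibleP; first exact: mpre.
apply: negligibleS sub _; apply: negligible_bigcup => m; apply/negligibleP => //.
apply/eqP; rewrite eq_le measure_ge0 andbT leNgt; apply/negP => /law_support_le[c fc ca].
have ac : a <= c by rewrite -lee_fin -fa; apply: ereal_inf_lbound; exists c.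
have m0 : 0 < m.+1%:R^-1 :> R by rewrite invr_gt0 ltr0n.
by move: m0 ca; set q := _^-1; clear -ac; lra.
Qed.

End LawSupportPreimage.

Lemma supp_sup_null (f : T -> R) b : measurable_fun setT f ->
  supp_sup P f = b%:E -> P (f @^-1` `]b, +oo[) = 0%E.
Proof.
move=> mf fb; have := supp_inf_null (measurable_funN mf) (a := - b).
rewrite supp_infN fb => /(_ erefl); congr (P _ = _).
by apply/seteqP; split => w /=; rewrite !in_itv /= andbT; lra.
Qed.

Lemma supp_compl_null (f : T -> R) a b : measurable_fun setT f ->
  supp_inf P f = a%:E -> supp_sup P f = b%:E -> P (f @^-1` (~` `[a, b])) = 0%E.
Proof.
move=> mf fa fb; have mpre Y : measurable Y -> measurable (f @^-1` Y).
  exact: measurable_preimageT.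
apply/negligibleP; first by apply: mpre; apply: measurableC; exact: measurable_itv.
apply: (@negligibleS _ _ _ _ (f @^-1` `]-oo, a[ `|` f @^-1` `]b, +oo[)).
  move=> w /= fab; have [fa'|af] := ltP (f w) a; [left|right]; rewrite /= in_itv //=.
  by rewrite andbT ltNge; apply/negP => fb'; apply: fab; rewrite /= in_itv /= af.
apply: negligibleU; (apply/negligibleP; first exact: mpre (measurable_itv _)).
  exact: supp_inf_null.
exact: supp_sup_null.
Qed.

Lemma supp_itv_prob1 (f : T -> R) a b : measurable_fun setT f ->
  supp_inf P f = a%:E -> supp_sup P f = b%:E -> P (f @^-1` `[a, b]) = 1%E.
Proof.
move=> mf fa fb; have mab : measurable (f @^-1` `[a, b]).
  exact: measurable_preimageT (measurable_itv _).
have := supp_compl_null mf fa fb; rewrite preimage_setC probability_setC // => /eqP.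
by rewrite eq_le sube_le0 => /andP[P1 _]; apply/eqP; rewrite eq_le probability_le1.
Qed.

End LawSupport.

Section AssumptionA8.
Context d (T : measurableType d) (R : realType) (P : probability T R).
Variables (X0 : T -> R) (mX0 : measurable_fun setT X0).

Lemma A8_support_cases : assumption_A8 P X0 ->
  (forall x1 x2 : R, (supp_inf P X0 <= x1%:E)%E -> (x2%:E <= supp_sup P X0)%E -> False)
  \/ exists a b c3, [/\ supp_inf P X0 = a%:E, supp_sup P X0 = b%:E, a < b, 0 < c3 &
    forall x1 x2, a <= x1 -> x1 <= x2 -> x2 <= b ->
      ((c3 * (x2 - x1))%:E <= P (X0 @^-1` `[x1, x2]))%E].
Proof.
move=> [c3 [C3 [c3_gt0 [C3_gt0 A8]]]].
(* By A8 such an interval would have probability at least 2. *)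
have short x1 x2 : (supp_inf P X0 <= x1%:E)%E -> (x2%:E <= supp_sup P X0)%E ->
    x2 - x1 = 2 / c3 -> False.
  move=> x1_ge x2_le x12; have x1_le : x1 <= x2 by rewrite -subr_ge0 x12 divr_ge0 ?ltW.
  have := le_trans (A8 x1 x2 x1_le x1_ge x2_le).1
    (probability_le1 P (measurable_preimageT mX0 (measurable_itv `[x1, x2]))).
  by rewrite x12 mulrC divfK ?gt_eqF // lee_fin; lra.
case E1 : (supp_inf P X0) => [a| |]; case E2 : (supp_sup P X0) => [b| |].
- right; exists a, b, c3; split => //; last first.
    by move=> x1 x2 ax1 x12 x2b; apply: (A8 x1 x2 x12 _ _).1; rewrite ?E1 ?E2 lee_fin.
  have P1 := supp_itv_prob1 mX0 E1 E2.
  have ab : a <= b.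
    rewrite leNgt; apply/negP => ba; move: P1.
    suff -> : X0 @^-1` `[a, b] = set0 by rewrite measure0 => -[] /eqP; rewrite eq_sym oner_eq0.
    by apply/seteqP; split => // w /=; rewrite in_itv /= => /andP[? ?]; lra.
  rewrite lt_neqAle ab andbT; apply/eqP => eab.
  have := (A8 a b ab _ _).2; rewrite ?E1 ?E2 ?lexx // => /(_ erefl erefl).
  by rewrite P1 eab subrr mulr0 lee_fin; lra.
- by exfalso; apply: (short a (a + 2 / c3)); rewrite ?E1 ?E2 ?leey //; ring.
- by left => x1 x2 _; rewrite leeNy_eq.
- by left => x1 x2; rewrite leye_eq.
- by left => x1 x2; rewrite leye_eq.
- by left => x1 x2; rewrite leye_eq.
- by exfalso; apply: (short (b - 2 / c3) b); rewrite ?E1 ?E2 ?leNye //; ring.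
- by exfalso; apply: (short 0 (2 / c3)); rewrite ?E1 ?E2 ?leNye ?leey //; ring.
- by left => x1 x2 _; rewrite leeNy_eq.
Qed.

End AssumptionA8.

Definition cell (R : realType) (a w : R) (j : nat) : set R :=
  `[a + j%:R * w, a + j%:R * w + w].

Section IidSample.
Context d (T : measurableType d) (R : realType) (P : probability T R).
Variables (X : nat -> T -> R) (X0 : T -> R).
Hypotheses (X_indep : mutually_independent P X)
  (X_law : forall i, same_law P (X i) X0).
Hypotheses (mX : forall i, measurable_fun setT (X i)) (mX0 : measurable_fun setT X0).

Definition sample_in (n : nat) (B : set R) : set T := \bigcap_(i in `I_n) X i @^-1` B.

Definition cells_hit (a w : R) (n N : nat) : set T :=
  \bigcap_(j in `I_N) \bigcup_(i in `I_n) X i @^-1` cell a w j.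

Lemma prob_sample_in n B : measurable B ->
  P (sample_in n B) = (fine (P (X0 @^-1` B)) ^+ n)%:E.
Proof.
move=> mB; have := X_indep (fun i (_ : i \in seq_fset tt (iota 0 n)) => mB).
rewrite (_ : \bigcap_(i in _) _ = sample_in n B); last first.
  have memI i : (i \in seq_fset tt (iota 0 n)) = (i < n)%N.
    by rewrite seq_fsetE mem_iota add0n.
  apply/seteqP; split => w Xw i.
    by move=> ilt; apply: Xw; change (i \in seq_fset tt (iota 0 n)); rewrite memI.
  by change (i \in seq_fset tt (iota 0 n) -> B (X i w)); rewrite memI; exact: Xw.
move=> ->; rewrite (perm_big _ (seq_fset_perm _ _)) undup_id ?iota_uniq //.
rewrite (eq_bigr (fun=> (fine (P (X0 @^-1` B)))%:E)); last first.
  by move=> i _; rewrite X_law // -probE //; exact: measurable_preimageT.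
have -> : iota 0 n = index_iota 0 n by rewrite /index_iota subn0.
by rewrite prodEFin prodr_const_nat subn0.
Qed.

Lemma measurable_sample_cells a b w n N :
  measurable (sample_in n `[a, b] `&` cells_hit a w n N).
Proof.
have mpre i : measurable (X i @^-1` _) := measurable_preimageT (mX i) (measurable_itv _).
apply: measurableI; apply: bigcap_measurableType => i _; first exact: mpre.
by apply: bigcup_measurable => i' _; exact: mpre.
Qed.

Lemma not_sample_cells_sub a b w n N :
  ~` (sample_in n `[a, b] `&` cells_hit a w n N) `<=`
    (\bigcup_i X i @^-1` (~` `[a, b])) `|` \bigcup_(j in `I_N) sample_in n (~` cell a w j).
Proof.
move=> w0 /= not_good; apply: contrapT => /not_orP[all_in not_miss]; apply: not_good.
split=> [i _|j jN]; first by apply: contrapT => Xi; apply: all_in; exists i.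
apply: contrapT => Xj; apply: not_miss; exists j => //.
by move=> i ilt Xi; apply: Xj; exists i.
Qed.

Lemma prob_sample_miss_cell a c3 w n j :
  ((c3 * w)%:E <= P (X0 @^-1` cell a w j))%E -> 0 <= c3 * w ->
  (P (sample_in n (~` cell a w j)) <= ((1 - c3 * w) ^+ n)%:E)%E.
Proof.
move=> Pcell cw_ge0; have mcell : measurable (cell a w j) by exact: measurable_itv.
have mX0cell := measurable_preimageT mX0 mcell.
rewrite prob_sample_in ?lee_fin; last exact: measurableC.
move: Pcell (probability_le1 P mX0cell); rewrite probE // !lee_fin => cw_le P_le1.
rewrite preimage_setC probability_setC // (probE P mX0cell) -EFinB /=.
by apply: lerXn2r; rewrite ?nnegrE; lra.
Qed.

Lemma prob_not_sample_cells a b c3 w n N :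
  P (X0 @^-1` (~` `[a, b])) = 0%E ->
  (forall j, (j < N)%N -> ((c3 * w)%:E <= P (X0 @^-1` cell a w j))%E) ->
  0 <= c3 * w ->
  (P (~` (sample_in n `[a, b] `&` cells_hit a w n N)) <= (N%:R * (1 - c3 * w) ^+ n)%:E)%E.
Proof.
move=> X0_out Pcell cw_ge0.
have mC : measurable (~` `[a, b] : set R) by apply: measurableC; exact: measurable_itv.
have mout : measurable (\bigcup_i X i @^-1` (~` `[a, b])).
  by apply: bigcupT_measurable => i; exact: measurable_preimageT.
have mmiss j : measurable (sample_in n (~` cell a w j)).
  apply: bigcap_measurableType => i _; apply: measurable_preimageT => //.
  by apply: measurableC; exact: measurable_itv.
have Pout : P (\bigcup_i X i @^-1` (~` `[a, b])) = 0%E.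
  apply/negligibleP => //; apply: negligible_bigcup => i.
  apply/(negligibleP _ (measurable_preimageT (mX i) mC)).
  exact: etrans (X_law i mC) X0_out.
have mmisses : measurable (\bigcup_(j in `I_N) sample_in n (~` cell a w j)).
  by apply: bigcup_measurable => j _; exact: mmiss.
have mgoodC := measurableC (measurable_sample_cells a b w n N).
have sub_le : (P (~` (sample_in n `[a, b] `&` cells_hit a w n N)) <=
    P ((\bigcup_i X i @^-1` (~` `[a, b])) `|`
       \bigcup_(j in `I_N) sample_in n (~` cell a w j)))%E.
  by apply: le_measure; rewrite ?inE //; [exact: measurableU | exact: not_sample_cells_sub].
have U_le : (P ((\bigcup_i X i @^-1` (~` `[a, b])) `|`
    \bigcup_(j in `I_N) sample_in n (~` cell a w j)) <=
    P (\bigcup_i X i @^-1` (~` `[a, b])) + P (\bigcup_(j in `I_N) sample_in n (~` cell a w j)))%E.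
  exact: measureU2.
apply: le_trans sub_le (le_trans U_le _).
rewrite Pout add0e bigcup_mkord; apply: le_trans (Boole_inequality P (fun j _ => mmiss j)) _.
apply: le_trans (_ : \sum_(j < N) ((1 - c3 * w) ^+ n)%:E <= _)%E.
  by apply: lee_sum => j _; exact: prob_sample_miss_cell (Pcell j (ltn_ord j)) cw_ge0.
by rewrite sumEFin sumr_const card_ord mulr_natl.
Qed.

End IidSample.

Lemma wpa1_A9_vacuous d (T : measurableType d) (R : realType) (P : probability T R)
    (k : R) (K : R -> R) (sl sr : \bar R) (beta c4 C4 c5 : R) (X : nat -> T -> R) :
  (forall x1 x2 : R, (sl <= x1%:E)%E -> (x2%:E <= sr)%E -> False) ->
  wpa1 P (fun n => [set w | A9_event k K sl sr beta c4 C4 c5 n (fun i => X i w)]).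
Proof.
move=> empty; exists (fun=> setT); split; last by rewrite probability_setT; exact: cvg_cst.
by move=> n; split => // w _ hn x1 x2 h1 h2; case: (empty _ _ h1 h2).
Qed.

Section Asymptotics.
Variable R : realType.

Lemma expr_onem_le (x : R) n : 0 <= x <= 1 -> 0 < x * n%:R ->
  (1 - x) ^+ n <= 2 / (x * n%:R) ^+ 2.
Proof.
move=> /andP[x0 x1] xn_gt0.
have le_exp : (1 - x) ^+ n <= expR (- x) ^+ n.
  by apply: lerXn2r; rewrite ?nnegrE ?expR_ge0 //; [lra | have := expR_ge1Dx (- x); lra].
have exp_inv : expR (- x) ^+ n = (expR (x * n%:R))^-1.
  by rewrite -expRM_natl -expRN mulrN mulrC.
apply: le_trans le_exp _; rewrite exp_inv.
have := @expR_ge1Dxn R (x * n%:R) 1 (ltW xn_gt0).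
rewrite (_ : (1.+1)`!%:R = 2 :> R) // => exp_ge.
have p2 : 0 < (x * n%:R) ^+ 2 by rewrite exprn_gt0.
by rewrite -[leRHS]invf_div lef_pV2 ?posrE ?expR_gt0 ?divr_gt0 //; lra.
Qed.

Lemma cvg_to1_harmonic (p : nat -> \bar R) (C : R) (n0 : nat) :
  (forall n, p n \is a fin_num) -> (forall n, fine (p n) <= 1) ->
  (forall n, (n0 <= n)%N -> 1 - C * harmonic n <= fine (p n)) ->
  p n @[n --> \oo] --> 1%E.
Proof.
move=> p_fin p_le1 p_ge; apply: cvg_EFin; first exact: nearW.
apply: (@squeeze_cvgr _ _ _ _ (fun n => 1 - C * harmonic n) (fun=> 1)).
- by near=> n; rewrite p_le1 andbT; apply: p_ge; near: n; exact: nbhs_infty_ge.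
- rewrite -[X in _ --> X]subr0; apply: cvgB; first exact: cvg_cst.
  by rewrite -(mulr0 C); apply: cvgM; [exact: cvg_cst | exact: cvg_harmonic].
- exact: cvg_cst.
Unshelve. all: end_near.
Qed.

Lemma h_min_rate_le_h_lo (L beta : R) : 0 < L -> 0 < beta ->
  exists n0, forall n, (n0 <= n)%N ->
    L / 5 * (ln n%:R / n%:R) `^ (3^-1) <= h_lo beta n / 8.
Proof.
move=> L0 beta0; set a := 1 / (2 * beta + 3).
have a0 : 0 < a by rewrite divr_gt0 //; lra.
have a3 : 3 * a < 1 by rewrite mulrA mulr1 ltr_pdivrMr; lra.
(* Taking logarithms, the claim reduces to [ln (ln n) <= del * ln n + O(1)]. *)
set del := (1 - 3 * a) / 2; have del0 : 0 < del by rewrite /del; lra.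
set C := ln (L / 5) - ln del / 3 + ln 8 - a * ln (ln (2 : R)).
exists (Num.Def.archi_bound (expR (3 * C / del)) + 2)%N => n n_ge.
have n1 : 1 < n%:R :> R by rewrite (ltr_nat _ 1) (leq_trans _ n_ge) // addn2.
have ln_n0 : 0 < ln (n%:R : R) by apply: ln_gt0.
have ln20 : 0 < ln (2 : R) by apply: ln_gt0; lra.
set t := ln (n%:R : R).
have t_big : 3 * C < t * del.
  rewrite -ltr_pdivrMr // -[X in X < _]expRK ltr_ln ?posrE ?expR_gt0 //; last lra.
  apply: lt_le_trans (archi_boundP (expR_ge0 _)) _.
  by rewrite ler_nat (leq_trans _ n_ge) // leq_addr.
have ln_t : ln t <= del * t - ln del.
  by have := ln_sublinear (mulr_gt0 del0 ln_n0); rewrite lnM ?posrE // -/t; lra.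
rewrite (_ : L / 5 * _ = expR (ln (L / 5) + 3^-1 * (ln t - t))); last first.
  rewrite expRD lnK ?posrE; last lra.
  by congr (_ * _); rewrite /powR gt_eqF ?divr_gt0 ?ln_div ?posrE //; lra.
rewrite (_ : h_lo beta n / 8 = expR (a * (ln (ln 2) - t) - ln 8)); last first.
  rewrite expRD expRN lnK ?posrE; last lra.
  by congr (_ / _); rewrite /h_lo /powR gt_eqF ?divr_gt0 ?ln_div ?posrE //; lra.
rewrite ler_expR.
have : 2 * (del * t) = t - 3 * (a * t) by rewrite /del; field.
have : C = ln (L / 5) - ln del / 3 + ln 8 - a * ln (ln 2) by [].
by rewrite mulrC in t_big; lra.
Qed.

Lemma cells_miss_le_harmonic (L c3 : R) beta n N : 0 < L -> 0 < c3 -> 0 < beta ->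
  (2 <= n)%N -> (0 < N)%N -> N%:R <= 8 * L / h_lo beta n + 5 ->
  c3 * (L / N%:R) <= 1 ->
  N%:R * (1 - c3 * (L / N%:R)) ^+ n <=
    4 * (8 * L + 5) ^+ 3 / (ln 2 * (c3 * L) ^+ 2) * harmonic n.
Proof.
move=> L0 c0 beta0 n2 N0 NL x_le1.
have /andP[hl0 hl1] := h_lo_itv01 beta0 n2; have hcube := h_lo_cube_ge beta0 n2.
have Nr : 0 < N%:R :> R by rewrite ltr0n.
have nr : 1 < n%:R :> R by rewrite (ltr_nat _ 1).
have l2 : 0 < ln (2 : R) by apply: ln_gt0; lra.
set x := c3 * (L / N%:R); have x0 : 0 < x by rewrite mulr_gt0 // divr_gt0.
have xn : 0 < x * n%:R by rewrite mulr_gt0 //; lra.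
apply: le_trans (_ : N%:R * (2 / (x * n%:R) ^+ 2) <= _).
  by rewrite ler_wpM2l //; apply: expr_onem_le => //; rewrite (ltW x0).
rewrite (_ : N%:R * _ = 2 * N%:R ^+ 3 / ((c3 * L) ^+ 2 * n%:R ^+ 2)); last first.
  by rewrite /x; field; rewrite !gt_eqF //; lra.
have N3 : N%:R ^+ 3 <= (8 * L + 5) ^+ 3 * (n%:R / ln 2).
  apply: le_trans (_ : ((8 * L + 5) / h_lo beta n) ^+ 3 <= _).
    by apply: lerXn2r; rewrite ?nnegrE ?divr_ge0 //; [lra | lra | rewrite mulrDl; apply: le_trans NL _; rewrite lerD2l ler_pdivlMr //; lra].
  rewrite expr_div_n ler_pM2l; last by apply: exprn_gt0; lra.
  by rewrite -[leRHS]invf_div lef_pV2 ?posrE ?exprn_gt0 ?divr_gt0 //; lra.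
have cLn : 0 < (c3 * L) ^+ 2 * n%:R ^+ 2 by rewrite !mulr_gt0 ?exprn_gt0 //; lra.
apply: le_trans (_ : 2 * ((8 * L + 5) ^+ 3 * (n%:R / ln 2)) / ((c3 * L) ^+ 2 * n%:R ^+ 2) <= _).
  by rewrite ler_pM2r ?invr_gt0 // ler_pM2l.
rewrite [leLHS](_ : _ = 2 * (8 * L + 5) ^+ 3 / (ln 2 * (c3 * L) ^+ 2) * n%:R^-1); last first.
  by field; rewrite !gt_eqF //; lra.
rewrite [leRHS](_ : _ = 2 * (8 * L + 5) ^+ 3 / (ln 2 * (c3 * L) ^+ 2) * (2 * harmonic n)).
  rewrite ler_pM2l ?divr_gt0 ?mulr_gt0 ?exprn_gt0 //; try lra.
  rewrite /harmonic /= -natr1 -div1r ler_pdivrMr; last lra.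
  by rewrite mulrAC ler_pdivlMr; lra.
by field; rewrite !gt_eqF //; lra.
Qed.

End Asymptotics.

Section BoundedSupportA9.
Context d (T : measurableType d) (R : realType) (P : probability T R).
Variables (X : nat -> T -> R) (X0 : T -> R).
Hypotheses (X_indep : mutually_independent P X)
  (X_law : forall i, same_law P (X i) X0).
Hypotheses (mX : forall i, measurable_fun setT (X i)) (mX0 : measurable_fun setT X0).
Variables (k beta M kap : R) (K : R -> R).
Hypotheses (k_ge0 : 0 <= k) (beta_gt0 : 0 < beta) (kap_gt0 : 0 < kap).
Hypothesis K_supp : forall x, K x != 0 -> -1 <= x <= 1.
Hypothesis K_le : forall x, `|K x| <= M.
Hypothesis K_ge : forall x, -(3/4) <= x <= 3/4 -> kap <= K x.
Variables (a b c3 : R).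
Hypotheses (ab : a < b) (c3_gt0 : 0 < c3).
Hypothesis X0_out : P (X0 @^-1` (~` `[a, b])) = 0%E.
Hypothesis X0_itv_ge : forall x1 x2, a <= x1 -> x1 <= x2 -> x2 <= b ->
  ((c3 * (x2 - x1))%:E <= P (X0 @^-1` `[x1, x2]))%E.

Let ncells n := (Num.truncn (8 * (b - a) / h_lo beta n) + 5)%N.
Let width n := (b - a) / (ncells n)%:R.

Let L_gt0 : 0 < b - a. Proof. by rewrite subr_gt0. Qed.
Let ncells_gt0 n : (0 < ncells n)%N. Proof. by rewrite addn_gt0 orbT. Qed.
Let width_gt0 n : 0 < width n.
Proof. by rewrite divr_gt0 ?ltr0n. Qed.
Let ncells_width n : (ncells n)%:R * width n = b - a.
Proof. by rewrite mulrC divfK // pnatr_eq0 -lt0n. Qed.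

Lemma ncells_le n : (2 <= n)%N -> (ncells n)%:R <= 8 * (b - a) / h_lo beta n + 5.
Proof.
move=> n2; have /andP[hl0 _] := h_lo_itv01 beta_gt0 n2.
by rewrite natrD lerD2r truncn_le divr_ge0 ?mulr_ge0 ?subr_ge0 ?(ltW ab) ?(ltW hl0).
Qed.

Lemma cells_narrow n : (2 <= n)%N -> 8 * width n <= h_lo beta n.
Proof.
move=> n2; have /andP[hl0 _] := h_lo_itv01 beta_gt0 n2.
have : 8 * (b - a) / h_lo beta n < (ncells n)%:R.
  apply: lt_le_trans (truncnS_gt _) _.
  by rewrite ler_nat -addn1 leq_add2l.
rewrite ltr_pdivrMr // => lt8; rewrite /width mulrA ler_pdivrMr ?ltr0n //.
by rewrite [leRHS]mulrC ltW.
Qed.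

Lemma cell_prob_ge n j : (j < ncells n)%N ->
  ((c3 * width n)%:E <= P (X0 @^-1` cell a (width n) j))%E.
Proof.
move=> jn; have jw := width_gt0 n.
have : j.+1%:R * width n <= (ncells n)%:R * width n by rewrite ler_pM2r // ler_nat.
rewrite ncells_width -natr1 mulrDl mul1r => jb.
have jw0 : 0 <= j%:R * width n by rewrite mulr_ge0 // ltW.
have := @X0_itv_ge (a + j%:R * width n) (a + j%:R * width n + width n).
rewrite (_ : a + j%:R * width n + width n - _ = width n); last by ring.
by apply; lra.
Qed.

(* Empty below the threshold [m] past which the rate conditions hold. *)
Definition cells_event (m n : nat) : set T :=
  if (m <= n)%N then sample_in X n `[a, b] `&` cells_hit X a (width n) n (ncells n)
  else set0.

Section Threshold.
Variable m : nat.
Hypothesis m_ge2 : (2 <= m)%N.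
Hypothesis h_min_small : forall n, (m <= n)%N ->
  (b - a) / 5 * (ln n%:R / n%:R) `^ (3^-1) <= h_lo beta n / 8.

Lemma measurable_cells_event n : measurable (cells_event m n).
Proof. by rewrite /cells_event; case: ifP => _ //; exact: measurable_sample_cells. Qed.

Lemma cells_event_sub_A9 n : cells_event m n `<=`
  [set w | A9_event k K a%:E b%:E beta (kap ^+ 2 * (1 / 16) `^ k) (M ^+ 2) (1 / 16)
             n (fun i => X i w)].
Proof.
rewrite /cells_event; case: ifPn => [mn w [xs_in hit]|_]; last exact: sub0set.
have n2 := leq_trans m_ge2 mn.
apply: (A9_event_of_cells_hit k_ge0 beta_gt0 kap_gt0 K_supp K_le K_ge n2
  (leq_addl _ 5 : (5 <= ncells n)%N) ab (cells_narrow n2) (h_min_small mn)).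
  by move=> i ilt; have := xs_in i ilt; rewrite /= in_itv.
by move=> j jN; have [i ilt Xi] := hit j jN; exists i => //; rewrite /= in_itv in Xi.
Qed.

Lemma prob_cells_event_ge n : (m <= n)%N ->
  1 - 4 * (8 * (b - a) + 5) ^+ 3 / (ln 2 * (c3 * (b - a)) ^+ 2) * harmonic n <=
    fine (P (cells_event m n)).
Proof.
move=> mn; have n2 := leq_trans m_ge2 mn.
have mE := measurable_cells_event n; rewrite /cells_event mn in mE *.
have miss := prob_not_sample_cells X_indep X_law mX mX0 n X0_out
  (@cell_prob_ge n) (mulr_ge0 (ltW c3_gt0) (ltW (width_gt0 n))).
have cw_le1 : c3 * width n <= 1.
  rewrite -lee_fin; apply: le_trans (cell_prob_ge (ncells_gt0 n)) _.
  by apply: probability_le1; exact: measurable_preimageT (measurable_itv _).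
have := cells_miss_le_harmonic L_gt0 c3_gt0 beta_gt0 n2 (ncells_gt0 n)
  (ncells_le n2) cw_le1.
move: miss; rewrite probability_setC // (probE P mE) -EFinB lee_fin => miss bound.
by rewrite lerBlDr -lerBlDl; apply: le_trans bound.
Qed.

End Threshold.

Lemma wpa1_A9_bounded_support :
  wpa1 P (fun n => [set w | A9_event k K a%:E b%:E beta
    (kap ^+ 2 * (1 / 16) `^ k) (M ^+ 2) (1 / 16) n (fun i => X i w)]).
Proof.
have [m0 hm0] := h_min_rate_le_h_lo L_gt0 beta_gt0.
pose m := (m0 + 2)%N; have m_ge2 : (2 <= m)%N by rewrite leq_addl.
have hm n : (m <= n)%N ->
    (b - a) / 5 * (ln n%:R / n%:R) `^ (3^-1) <= h_lo beta n / 8.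
  by move=> mn; apply: hm0; exact: leq_trans (leq_addr 2 m0) mn.
exists (cells_event m); split.
  by move=> n; split; [exact: measurable_cells_event | exact: cells_event_sub_A9].
apply: (cvg_to1_harmonic (n0 := m)) => [n|n|n]; last exact: prob_cells_event_ge.
  by rewrite fin_num_measure //; exact: measurable_cells_event.
by rewrite -lee_fin -probE ?probability_le1 //; exact: measurable_cells_event.
Qed.

End BoundedSupportA9.

Theorem proposition3 (d : measure_display) (T : measurableType d)
    (R : realType) (P : probability T R)
    (X0 : {RV P >-> R}) (X : nat -> {RV P >-> R})
    (k : R) (K : R -> R) :
  0 <= k ->
  mutually_independent P (fun i => X i : T -> R) ->
  (forall i, same_law P (X i) X0) ->
  assumption_A8 P X0 ->
  closure [set x | K x != 0] = `[-1, 1]%classic ->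
  continuous K ->
  (forall x : R, -1 < x < 1 -> 0 < K x) ->
  forall beta : R, 0 < beta <= 1 ->
    assumption_A9 P (fun i => X i : T -> R) X0 k K beta.
Proof.
move=> k_ge0 X_indep X_law A8 K_closure K_cont K_pos beta /andP[beta_gt0 _].
have K_supp := nonzero_in_closure_itv K_closure.
have [M [M_gt0 K_le]] := compact_support_bounded K_cont K_supp.
have [kap [kap_gt0 K_ge]] := positive_lower_bound K_cont K_pos (r := 3 / 4) (ltac:(lra)).
exists (kap ^+ 2 * (1 / 16) `^ k), (M ^+ 2), (1 / 16).
split; first by rewrite mulr_gt0 ?exprn_gt0 ?powR_gt0.
split; first by rewrite exprn_gt0.
split; first lra.
have mX0 : measurable_fun setT X0 by exact: measurable_funP.
case: (A8_support_cases mX0 A8) => [empty|[a [b [c3 [E1 E2 ab c3_gt0 X0_itv_ge]]]]].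
  exact: wpa1_A9_vacuous.
have mX i : measurable_fun setT (X i) by exact: measurable_funP.
rewrite E1 E2; exact: (wpa1_A9_bounded_support X_indep X_law mX mX0 k_ge0 beta_gt0
  kap_gt0 K_supp K_le K_ge ab c3_gt0 (supp_compl_null mX0 E1 E2) X0_itv_ge).
Qed.
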